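(* Let $N\ge3$ and $p>p_{\rm S}$. Suppose $y^*$ is a solution, defined on $(-\infty,T]$ for some $T\in\mathbb{R}$, of $$y''+\alpha y'-y+y^p+B_0(t)y^p+B_1(t)y=0,\qquad y(t)\to1\ \text{as }t\to-\infty.$$ Then $y^*(t)=1+O(e^{2mt})$ as $t\to-\infty$.
   Context: $p_{\rm S}=\frac{N+2}{N-2}$, $\mu=\frac{2}{p-1}$, $a=\{\mu(N-2-\mu)\}^{\mu/2}$, $m=a^{-(p-1)/2}$, $\alpha=m(N-2-2\mu)$, $q=\frac{N-2}{2}(p-p_{\rm S})$, $B_0(t)=(1+e^{2mt})^q-1$, $B_1(t)=\frac{N(N-2)e^{2mt}}{(1+e^{2mt})^2}$. *)

From Stdlib Require Import Reals.
Open Scope R_scope.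

Definition pS (N : nat) : R := (INR N + 2) / (INR N - 2).
Definition mu (p : R) : R := 2 / (p - 1).
Definition a_const (N : nat) (p : R) : R :=
  Rpower (mu p * (INR N - 2 - mu p)) (mu p / 2).
Definition m_const (N : nat) (p : R) : R :=
  Rpower (a_const N p) (- (p - 1) / 2).
Definition alpha_const (N : nat) (p : R) : R :=
  m_const N p * (INR N - 2 - 2 * mu p).
Definition q_const (N : nat) (p : R) : R := (INR N - 2) / 2 * (p - pS N).
Definition B0_fun (N : nat) (p t : R) : R :=
  Rpower (1 + exp (2 * m_const N p * t)) (q_const N p) - 1.
Definition B1_fun (N : nat) (p t : R) : R :=
  INR N * (INR N - 2) * exp (2 * m_const N p * t)
  / (1 + exp (2 * m_const N p * t)) ^ 2.

From Stdlib Require Import Reals Lra Psatz.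
Open Scope R_scope.

(* Writing z = y - 1, the equation becomes a damped linear oscillator
   z'' + alpha z' + (p - 1) z = r whose forcing is small: |r| <= eps |z| + C e^{2mt},
   the first term coming from the Taylor expansion of y^p at 1 and the second from B0
   and B1, which are O(e^{2mt}) as t -> -oo.  For a suitable quadratic Lyapunov
   function V ~ z'^2 + z^2 this gives V' + c V <= K e^{4mt}; since V is bounded at -oo,
   integrating from -oo yields V <= K' e^{4mt}, hence |z| = O(e^{2mt}). *)

Lemma derivable_pt_lim_value_eq (f : R -> R) (x l l' : R) :
  derivable_pt_lim f x l -> l = l' -> derivable_pt_lim f x l'.
Proof. intros H <-; exact H. Qed.

(* The Stdlib rules are stated for [(f + g)%F] etc.; these eta-expanded forms are the
   ones [apply] can match against goals such as [fun t => w t * exp (c * t)]. *)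
Lemma derivable_pt_lim_plus_fun (f g : R -> R) (x a b : R) :
  derivable_pt_lim f x a -> derivable_pt_lim g x b ->
  derivable_pt_lim (fun t => f t + g t) x (a + b).
Proof. exact (derivable_pt_lim_plus f g x a b). Qed.

Lemma derivable_pt_lim_minus_fun (f g : R -> R) (x a b : R) :
  derivable_pt_lim f x a -> derivable_pt_lim g x b ->
  derivable_pt_lim (fun t => f t - g t) x (a - b).
Proof. exact (derivable_pt_lim_minus f g x a b). Qed.

Lemma derivable_pt_lim_mult_fun (f g : R -> R) (x a b : R) :
  derivable_pt_lim f x a -> derivable_pt_lim g x b ->
  derivable_pt_lim (fun t => f t * g t) x (a * g x + f x * b).
Proof. exact (derivable_pt_lim_mult f g x a b). Qed.

Lemma derivable_pt_lim_exp_scal (c x : R) :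
  derivable_pt_lim (fun t => exp (c * t)) x (c * exp (c * x)).
Proof.
  apply (derivable_pt_lim_value_eq _ _ (exp (c * x) * (0 * x + c * 1))).
  - apply (derivable_pt_lim_comp (fun t => c * t) exp).
    + apply (derivable_pt_lim_mult_fun (fun _ => c) (fun t => t)).
      * apply derivable_pt_lim_const.
      * apply derivable_pt_lim_id.
    + apply derivable_pt_lim_exp.
  - ring.
Qed.

Ltac derivable_pt_lim_auto :=
  repeat first
    [ eassumption
    | apply derivable_pt_lim_exp_scal
    | apply derivable_pt_lim_minus_fun
    | apply derivable_pt_lim_plus_fun
    | apply derivable_pt_lim_mult_fun
    | apply derivable_pt_lim_const ].

Lemma Rabs_le_between (x b : R) : Rabs x <= b -> - b <= x <= b.
Proof. unfold Rabs; destruct (Rcase_abs x); lra. Qed.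

Lemma nonincreasing_of_derive_nonpos (f f' : R -> R) (a : R) :
  (forall t, t <= a -> derivable_pt_lim f t (f' t)) ->
  (forall t, t <= a -> f' t <= 0) ->
  forall s t, s <= t -> t <= a -> f t <= f s.
Proof.
  intros Hd Hneg s t Hst Hta.
  destruct (Req_dec s t) as [-> | Hne]; [lra |].
  destruct (MVT_cor2 f f' s t) as [c [Hc Hcst]]; [lra | intros; apply Hd; lra |].
  assert (f' c <= 0) by (apply Hneg; lra).
  nra.
Qed.

Lemma nonpos_of_nonincreasing_exp_bound (G : R -> R) (c A a : R) :
  0 < c ->
  (forall s t, s <= t -> t <= a -> G t <= G s) ->
  (forall s, s <= a -> G s <= A * exp (c * s)) ->
  forall t, t <= a -> G t <= 0.
Proof.
  intros Hc Hmono Hbound t Hta.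
  destruct (Rle_dec (G t) 0) as [| Hpos]; [assumption | exfalso].
  set (A' := Rmax A 1).
  assert (HAA' : A <= A') by apply Rmax_l.
  assert (HA' : 0 < A') by (pose proof (Rmax_r A 1); unfold A'; lra).
  set (s := Rmin t (ln (G t / A') / c - 1)).
  assert (Hst : s <= t) by apply Rmin_l.
  assert (Hcs : c * s < ln (G t / A')).
  { assert (s <= ln (G t / A') / c - 1) by apply Rmin_r.
    assert (c * (ln (G t / A') / c - 1) = ln (G t / A') - c) by (field; lra).
    nra. }
  assert (Hexp : exp (c * s) < G t / A').
  { rewrite <- (exp_ln (G t / A')) by (apply Rdiv_lt_0_compat; lra).
    now apply exp_increasing. }
  pose proof (Hmono s t Hst Hta). pose proof (Hbound s ltac:(lra)).
  pose proof (exp_pos (c * s)).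
  assert (A' * exp (c * s) < G t).
  { replace (G t) with (A' * (G t / A')) by (field; lra). nra. }
  assert (A * exp (c * s) <= A' * exp (c * s)) by (apply Rmult_le_compat_r; lra).
  lra.
Qed.

(* A differential inequality V' + cV <= K e^{kt} on a half-line (-oo, a], integrated
   from -oo; boundedness of V replaces an initial condition. *)
Lemma le_exp_of_derive_damped (V V' : R -> R) (c k K Vm a : R) :
  0 < c -> 0 <= k -> 0 <= K ->
  (forall t, t <= a -> derivable_pt_lim V t (V' t)) ->
  (forall t, t <= a -> V' t + c * V t <= K * exp (k * t)) ->
  (forall t, t <= a -> V t <= Vm) ->
  forall t, t <= a -> V t <= K / (c + k) * exp (k * t).
Proof.
  intros Hc Hk HK HV Hineq Hbound.
  set (K' := K / (c + k)).
  assert (HK' : 0 <= K') by (unfold K'; apply Rmult_le_pos; [lra | left; apply Rinv_0_lt_compat; lra]).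
  set (G := fun s => V s * exp (c * s) - K' * exp ((c + k) * s)).
  assert (Hexp_split : forall s, exp ((c + k) * s) = exp (c * s) * exp (k * s)).
  { intros s. rewrite <- exp_plus. f_equal. ring. }
  assert (Hmono : forall s t, s <= t -> t <= a -> G t <= G s).
  { apply (nonincreasing_of_derive_nonpos G
      (fun s => exp (c * s) * (V' s + c * V s - K * exp (k * s)))).
    - intros s Hs. unfold G.
      eapply derivable_pt_lim_value_eq; [derivable_pt_lim_auto; now apply HV |].
      rewrite Hexp_split. unfold K'. field. lra.
    - intros s Hs. pose proof (exp_pos (c * s)). pose proof (Hineq s Hs). nra. }
  intros t Ht.
  assert (HG : G t <= 0).
  { apply (nonpos_of_nonincreasing_exp_bound G c Vm a Hc Hmono); [| assumption].
    intros s Hs. unfold G.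
    pose proof (exp_pos (c * s)). pose proof (exp_pos ((c + k) * s)). pose proof (Hbound s Hs).
    nra. }
  unfold G in HG. rewrite Hexp_split in HG.
  pose proof (exp_pos (c * t)).
  apply (Rmult_le_reg_r (exp (c * t))); [assumption | nra].
Qed.

(* If w > M/al at t, then (w - M/al) e^{al s} is nonincreasing, so w > M/al on all of
   (-oo, t]; integrating w over an interval of length (|h| + 1) al / M then makes z
   oscillate by more than h. *)
Lemma le_of_damped_derive_bounded_oscillation (z w w' : R -> R) (al M h a : R) :
  0 < al -> 0 < M ->
  (forall t, t <= a -> derivable_pt_lim z t (w t)) ->
  (forall t, t <= a -> derivable_pt_lim w t (w' t)) ->
  (forall t, t <= a -> w' t + al * w t <= M) ->
  (forall s t, s <= a -> t <= a -> z t - z s <= h) ->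
  forall t, t <= a -> w t <= M / al.
Proof.
  intros Hal HM Hz Hw Hdamp Hosc t Ht.
  destruct (Rle_dec (w t) (M / al)) as [| Hgt]; [assumption | exfalso].
  assert (Hmono : forall s, s <= t ->
      (w t - M / al) * exp (al * t) <= (w s - M / al) * exp (al * s)).
  { intros s Hs.
    apply (nonincreasing_of_derive_nonpos (fun s => (w s - M / al) * exp (al * s))
             (fun s => (w' s + al * w s - M) * exp (al * s)) t); [| | exact Hs | lra].
    - intros u Hu. eapply derivable_pt_lim_value_eq.
      + derivable_pt_lim_auto. apply Hw; lra.
      + cbv beta. field. lra.
    - intros u Hu. pose proof (Hdamp u ltac:(lra)). pose proof (exp_pos (al * u)). nra. }
  assert (Hbig : forall s, s <= t -> M / al < w s).
  { intros s Hs. pose proof (Hmono s Hs).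
    pose proof (exp_pos (al * t)). pose proof (exp_pos (al * s)). nra. }
  set (s := t - (Rabs h + 1) * al / M).
  assert (Hlen : M / al * (t - s) = Rabs h + 1) by (unfold s; field; lra).
  assert (Hs : s < t).
  { pose proof (Rabs_pos h).
    assert (0 < (Rabs h + 1) * al / M) by (apply Rdiv_lt_0_compat; nra).
    unfold s; lra. }
  destruct (MVT_cor2 z w s t) as [c [Hc Hcst]]; [lra | intros; apply Hz; lra |].
  pose proof (Hbig c ltac:(lra)). pose proof (Hosc s t ltac:(lra) Ht).
  pose proof (Rle_abs h).
  assert (M / al * (t - s) < w c * (t - s)) by (apply Rmult_lt_compat_r; lra).
  lra.
Qed.

Lemma Rpower_1_plus_linear_approx (p eps : R) : 0 < eps ->
  exists d, 0 < d /\ d <= 1/2 /\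
    forall z, Rabs z <= d -> Rabs (Rpower (1 + z) p - 1 - p * z) <= eps * Rabs z.
Proof.
  intros Heps.
  assert (Hone : forall x, Rpower 1 x = 1)
    by (intro; unfold Rpower; rewrite ln_1, Rmult_0_r; apply exp_0).
  pose proof (derivable_pt_lim_power 1 p Rlt_0_1) as Hder.
  rewrite Hone, Rmult_1_r in Hder.
  destruct (Hder eps Heps) as [del Hdel].
  pose proof (cond_pos del).
  exists (Rmin (del / 2) (1 / 2)).
  split; [apply Rmin_pos; lra |]. split; [apply Rmin_r |].
  intros z Hz.
  destruct (Req_dec z 0) as [-> | Hz0].
  - rewrite Rplus_0_r, Hone, Rabs_R0. replace (1 - 1 - p * 0) with 0 by ring.
    rewrite Rabs_R0. lra.
  - assert (Hzdel : Rabs z < del) by (pose proof (Rmin_l (del / 2) (1 / 2)); lra).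
    pose proof (Hdel z Hz0 Hzdel) as Hq. rewrite Hone in Hq.
    replace (Rpower (1 + z) p - 1 - p * z)
      with (z * ((Rpower (1 + z) p - 1) / z - p)) by (field; assumption).
    rewrite Rabs_mult, Rmult_comm. apply Rmult_le_compat_r; [apply Rabs_pos | lra].
Qed.

Lemma exp_le_exp (x y : R) : x <= y -> exp x <= exp y.
Proof.
  intros [Hlt | ->]; [left; now apply exp_increasing | right; reflexivity].
Qed.

Lemma Rpower_1_plus_sub1_bounds (q E : R) : 0 < q -> 0 < E ->
  0 <= Rpower (1 + E) q - 1 <= q * exp (q * E) * E.
Proof.
  intros Hq HE. unfold Rpower.
  assert (Hln0 : 0 < ln (1 + E)) by (rewrite <- ln_1; apply ln_increasing; lra).
  assert (HlnE : ln (1 + E) < E).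
  { rewrite <- (ln_exp E) at 2. apply ln_increasing; [lra | apply exp_ineq1; lra]. }
  set (x := q * ln (1 + E)).
  assert (0 <= x <= q * E) by (unfold x; split; nra).
  pose proof (exp_ineq1_le x).
  assert (exp x - 1 <= x * exp x).
  { pose proof (exp_ineq1_le (- x)). pose proof (exp_pos x).
    assert (exp (- x) * exp x = 1) by (rewrite <- exp_plus, Rplus_opp_l; apply exp_0).
    nra. }
  assert (exp x <= exp (q * E)) by (apply exp_le_exp; lra).
  pose proof (exp_pos x). split; nra.
Qed.

Section Lyapunov.

Variables al be : R.
Hypotheses (Hal : 0 < al) (Hbe : 0 < be).

(* Energy of z'' + al z' + be z = 0; the cross term al z z' makes it strictly
   dissipated: its derivative along solutions is -al z'^2 - al be z^2. *)
Definition lyap (w z : R) : R := w * w + al * (z * w) + (be + al * al / 2) * (z * z).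

Lemma lyap_ge (w z : R) : be * (z * z) <= lyap w z.
Proof.
  unfold lyap.
  assert (0 <= (w + al * z / 2) * (w + al * z / 2)) by apply Rle_0_sqr.
  assert (0 <= al * al / 4 * (z * z)) by (apply Rmult_le_pos; [nra | apply Rle_0_sqr]).
  assert (w * w + al * (z * w) + (be + al * al / 2) * (z * z) - be * (z * z)
          = (w + al * z / 2) * (w + al * z / 2) + al * al / 4 * (z * z)) by field.
  lra.
Qed.

Lemma lyap_le (w z : R) : lyap w z <= (1 + al + be + al * al) * (w * w + z * z).
Proof.
  unfold lyap.
  assert (0 <= al / 2 * ((w - z) * (w - z))) by (apply Rmult_le_pos; [lra | apply Rle_0_sqr]).
  assert (0 <= (be + al / 2 + al * al) * (w * w))
    by (apply Rmult_le_pos; [nra | apply Rle_0_sqr]).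
  assert (0 <= (1 + al / 2 + al * al / 2) * (z * z))
    by (apply Rmult_le_pos; [nra | apply Rle_0_sqr]).
  assert ((1 + al + be + al * al) * (w * w + z * z)
          - (w * w + al * (z * w) + (be + al * al / 2) * (z * z))
          = al / 2 * ((w - z) * (w - z)) + (be + al / 2 + al * al) * (w * w)
            + (1 + al / 2 + al * al / 2) * (z * z)) by field.
  lra.
Qed.

Lemma lyap_derive_eq (w w' z : R) :
  2 * w * w' + al * (w * w + z * w') + (be + al * al / 2) * (2 * z * w)
  = - al * (w * w) - al * be * (z * z) + (2 * w + al * z) * (w' + al * w + be * z).
Proof. field. Qed.

(* Young's inequality on each product, with weights chosen so that the forcing eats
   at most half of the dissipation mu (w^2 + z^2). *)
Lemma forcing_absorb (mu eps C0 E w z r : R) :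
  0 < mu -> 0 <= eps -> 4 * eps * (1 + al) <= mu ->
  Rabs r <= eps * Rabs z + C0 * E ->
  (2 * w + al * z) * r <= mu / 2 * (w * w + z * z) + (4 + al * al) * C0 * C0 / mu * (E * E).
Proof.
  intros Hmu Heps Hsmall Hr.
  set (aw := Rabs w). set (az := Rabs z).
  assert (Hw2 : w * w = aw * aw) by (unfold aw; rewrite <- Rabs_mult, Rabs_right; nra).
  assert (Hz2 : z * z = az * az) by (unfold az; rewrite <- Rabs_mult, Rabs_right; nra).
  assert (Haw : 0 <= aw) by apply Rabs_pos. assert (Haz : 0 <= az) by apply Rabs_pos.
  assert (Hprod : (2 * w + al * z) * r <= (2 * aw + al * az) * (eps * az + C0 * E)).
  { apply Rle_trans with (Rabs ((2 * w + al * z) * r)); [apply Rle_abs |].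
    rewrite Rabs_mult. apply Rmult_le_compat; try apply Rabs_pos; [| assumption].
    apply Rle_trans with (Rabs (2 * w) + Rabs (al * z)); [apply Rabs_triang |].
    rewrite !Rabs_mult, (Rabs_right 2), (Rabs_right al) by lra. unfold aw, az; lra. }
  assert (Hyoung_w : 2 * aw * (C0 * E) <= mu / 4 * (aw * aw) + 4 * C0 * C0 / mu * (E * E)).
  { assert (0 <= mu / 4 * ((aw - 4 / mu * C0 * E) * (aw - 4 / mu * C0 * E)))
      by (apply Rmult_le_pos; [lra | apply Rle_0_sqr]).
    replace (mu / 4 * (aw * aw) + 4 * C0 * C0 / mu * (E * E))
      with (mu / 4 * ((aw - 4 / mu * C0 * E) * (aw - 4 / mu * C0 * E)) + 2 * aw * (C0 * E))
      by (field; lra).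
    lra. }
  assert (Hyoung_z : al * az * (C0 * E) <= mu / 4 * (az * az) + al * al * C0 * C0 / mu * (E * E)).
  { assert (0 <= mu / 4 * ((az - 2 * al / mu * C0 * E) * (az - 2 * al / mu * C0 * E)))
      by (apply Rmult_le_pos; [lra | apply Rle_0_sqr]).
    replace (mu / 4 * (az * az) + al * al * C0 * C0 / mu * (E * E))
      with (mu / 4 * ((az - 2 * al / mu * C0 * E) * (az - 2 * al / mu * C0 * E))
            + al * az * (C0 * E))
      by (field; lra).
    lra. }
  assert (Hsplit : (4 + al * al) * C0 * C0 / mu * (E * E)
                   = 4 * C0 * C0 / mu * (E * E) + al * al * C0 * C0 / mu * (E * E))
    by (field; lra).
  assert (Heps_part : (2 * aw + al * az) * (eps * az) <= mu / 4 * (aw * aw + az * az)).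
  { assert (Hamgm : 2 * aw * az <= aw * aw + az * az)
      by (pose proof (Rle_0_sqr (aw - az)); unfold Rsqr in *; lra).
    assert (Hsq : 0 <= aw * aw) by apply Rle_0_sqr.
    assert (0 <= az * az) by apply Rle_0_sqr.
    assert (eps * (2 * aw * az) <= eps * (aw * aw + az * az))
      by (apply Rmult_le_compat_l; lra).
    assert (eps * al * (az * az) <= eps * al * (aw * aw + az * az))
      by (apply Rmult_le_compat_l; nra).
    assert (eps * (1 + al) * (aw * aw + az * az) <= mu / 4 * (aw * aw + az * az))
      by (apply Rmult_le_compat_r; lra).
    replace ((2 * aw + al * az) * (eps * az))
      with (eps * (2 * aw * az) + eps * al * (az * az)) by ring.
    nra. }
  rewrite Hw2, Hz2. nra.
Qed.

End Lyapunov.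

Section DampedOscillator.

Variables (z w w' : R -> R) (al be lam eps C0 d a : R).
Hypotheses (Hal : 0 < al) (Hbe : 0 < be) (Hlam : 0 < lam) (HC0 : 0 <= C0)
  (Heps : 0 <= eps) (Hsmall : 4 * eps * (1 + al) <= Rmin al (al * be)).
Hypothesis Hz : forall t, t <= a -> derivable_pt_lim z t (w t).
Hypothesis Hw : forall t, t <= a -> derivable_pt_lim w t (w' t).
Hypothesis Hforcing : forall t, t <= a ->
  Rabs (w' t + al * w t + be * z t) <= eps * Rabs (z t) + C0 * exp (lam * t).
Hypothesis Hzd : forall t, t <= a -> Rabs (z t) <= d.

Let M := (be + eps) * d + C0 * exp (lam * a) + 1.

Lemma damped_accel_bounded (t : R) : t <= a -> Rabs (w' t + al * w t) <= M.
Proof.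
  intros Ht.
  pose proof (Hforcing t Ht) as Hf. pose proof (Hzd t Ht) as Hzt.
  pose proof (Rabs_pos (z t)).
  assert (exp (lam * t) <= exp (lam * a)) by (apply exp_le_exp; nra).
  assert (C0 * exp (lam * t) <= C0 * exp (lam * a)) by (apply Rmult_le_compat_l; lra).
  assert (eps * Rabs (z t) <= eps * d) by (apply Rmult_le_compat_l; lra).
  assert (Rabs (be * z t) <= be * d)
    by (rewrite Rabs_mult, Rabs_right by lra; apply Rmult_le_compat_l; lra).
  replace (w' t + al * w t) with ((w' t + al * w t + be * z t) + - (be * z t)) by ring.
  eapply Rle_trans; [apply Rabs_triang |]. rewrite Rabs_Ropp. unfold M. lra.
Qed.

Lemma damped_velocity_bounded (t : R) : t <= a -> Rabs (w t) <= M / al.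
Proof.
  assert (HM : 0 < M).
  { unfold M. pose proof (Rle_trans _ _ _ (Rabs_pos (z a)) (Hzd a (Rle_refl a))).
    pose proof (exp_pos (lam * a)). nra. }
  assert (Hosc : forall s u, s <= a -> u <= a -> z u - z s <= 2 * d).
  { intros s u Hs Hu.
    pose proof (Rabs_le_between _ _ (Hzd s Hs)).
    pose proof (Rabs_le_between _ _ (Hzd u Hu)). lra. }
  intros Ht. apply Rabs_le. split.
  - enough (- w t <= M / al) by lra.
    apply (le_of_damped_derive_bounded_oscillation (fun t => - z t) (fun t => - w t)
             (fun t => - w' t) al M (2 * d) a); try assumption.
    + intros u Hu. exact (derivable_pt_lim_opp z u (w u) (Hz u Hu)).
    + intros u Hu. exact (derivable_pt_lim_opp w u (w' u) (Hw u Hu)).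
    + intros u Hu. pose proof (damped_accel_bounded u Hu) as Hb.
      apply Rabs_le_between in Hb. lra.
    + intros s u Hs Hu. pose proof (Hosc u s Hu Hs). lra.
  - apply (le_of_damped_derive_bounded_oscillation z w w' al M (2 * d) a); try assumption.
    intros u Hu. pose proof (damped_accel_bounded u Hu) as Hb.
    apply Rabs_le_between in Hb. lra.
Qed.

Lemma damped_decay : exists C, forall t, t <= a -> Rabs (z t) <= C * exp (lam * t).
Proof.
  set (mu := Rmin al (al * be)).
  set (L := 1 + al + be + al * al).
  set (c := mu / (2 * L)).
  set (K := (4 + al * al) * C0 * C0 / mu).
  set (V := fun t => lyap al be (w t) (z t)).
  set (V' := fun t => 2 * w t * w' t + al * (w t * w t + z t * w' t)
                      + (be + al * al / 2) * (2 * z t * w t)).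
  assert (Hmu : 0 < mu) by (apply Rmin_pos; nra).
  assert (Hmu_al : mu <= al) by apply Rmin_l.
  assert (Hmu_albe : mu <= al * be) by apply Rmin_r.
  assert (HL : 0 < L) by (unfold L; nra).
  assert (Hc : 0 < c) by (apply Rdiv_lt_0_compat; lra).
  assert (HK : 0 <= K).
  { apply Rmult_le_pos; [| left; apply Rinv_0_lt_compat; lra].
    apply Rmult_le_pos; [| lra]. apply Rmult_le_pos; nra. }
  assert (HV' : forall t, t <= a -> derivable_pt_lim V t (V' t)).
  { intros t Ht. pose proof (Hz t Ht). pose proof (Hw t Ht).
    unfold V, V', lyap. eapply derivable_pt_lim_value_eq.
    - derivable_pt_lim_auto.
    - cbv beta. ring. }
  assert (Hdiss : forall t, t <= a -> V' t + c * V t <= K * exp (2 * lam * t)).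
  { intros t Ht. unfold V', V. rewrite lyap_derive_eq.
    assert (Hexp2 : exp (2 * lam * t) = exp (lam * t) * exp (lam * t)).
    { rewrite <- exp_plus. f_equal. ring. }
    pose proof (forcing_absorb al Hal mu eps C0 (exp (lam * t)) (w t) (z t) _
                  Hmu Heps Hsmall (Hforcing t Ht)) as Habs.
    pose proof (lyap_le al be Hal Hbe (w t) (z t)) as Hup.
    assert (c * lyap al be (w t) (z t) <= mu / 2 * (w t * w t + z t * z t)).
    { apply Rle_trans with (c * (L * (w t * w t + z t * z t))).
      - apply Rmult_le_compat_l; [lra | exact Hup].
      - right. unfold c. field. lra. }
    assert (0 <= w t * w t) by apply Rle_0_sqr.
    assert (0 <= z t * z t) by apply Rle_0_sqr.
    rewrite Hexp2. unfold K in Habs |- *. nra. }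
  assert (Hbdd : forall t, t <= a -> V t <= L * ((M / al) * (M / al) + d * d)).
  { intros t Ht. apply Rle_trans with (L * (w t * w t + z t * z t)); [apply lyap_le; lra |].
    apply Rmult_le_compat_l; [lra |].
    pose proof (Rabs_le_between _ _ (damped_velocity_bounded t Ht)).
    pose proof (Rabs_le_between _ _ (Hzd t Ht)). nra. }
  pose proof (le_exp_of_derive_damped V V' c (2 * lam) K _ a Hc ltac:(lra) HK HV' Hdiss Hbdd)
    as Hgronwall.
  set (D := K / (c + 2 * lam) / be).
  assert (HD : 0 <= D).
  { unfold D. apply Rmult_le_pos; [| left; apply Rinv_0_lt_compat; lra].
    apply Rmult_le_pos; [lra | left; apply Rinv_0_lt_compat; lra]. }
  exists (sqrt D). intros t Ht.
  pose proof (exp_pos (lam * t)) as He.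
  rewrite <- (Rabs_right (sqrt D * exp (lam * t)))
    by (apply Rle_ge, Rmult_le_pos; [apply sqrt_pos | lra]).
  apply Rsqr_le_abs_0.
  rewrite Rsqr_mult, Rsqr_sqrt by exact HD.
  pose proof (lyap_ge al be (w t) (z t)) as Hlow.
  pose proof (Hgronwall t Ht) as Hup. unfold V in Hup.
  assert (Hexp2 : exp (2 * lam * t) = exp (lam * t) * exp (lam * t)).
  { rewrite <- exp_plus. f_equal. ring. }
  rewrite Hexp2 in Hup. unfold Rsqr, D.
  apply (Rmult_le_reg_l be); [lra |].
  replace (be * (K / (c + 2 * lam) / be * (exp (lam * t) * exp (lam * t))))
    with (K / (c + 2 * lam) * (exp (lam * t) * exp (lam * t))) by (field; lra).
  lra.
Qed.

End DampedOscillator.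

Lemma m_const_pos (N : nat) (p : R) : 0 < m_const N p.
Proof. apply exp_pos. Qed.

Section Coefficients.

Variables (N : nat) (p : R).
Hypotheses (HN : (3 <= N)%nat) (Hp : pS N < p).

Lemma INR_ge_3 : 3 <= INR N.
Proof. replace 3 with (INR 3) by (simpl; ring). now apply le_INR. Qed.

Lemma supercritical_ineq : INR N + 2 < p * (INR N - 2).
Proof.
  pose proof INR_ge_3. unfold pS in Hp.
  assert ((INR N + 2) / (INR N - 2) * (INR N - 2) < p * (INR N - 2))
    by (apply Rmult_lt_compat_r; lra).
  replace ((INR N + 2) / (INR N - 2) * (INR N - 2)) with (INR N + 2) in * by (field; lra).
  assumption.
Qed.

Lemma exponent_gt_1 : 1 < p.
Proof. pose proof INR_ge_3. pose proof supercritical_ineq. nra. Qed.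

Lemma alpha_const_pos : 0 < alpha_const N p.
Proof.
  pose proof INR_ge_3. pose proof supercritical_ineq. pose proof exponent_gt_1.
  unfold alpha_const, mu. apply Rmult_lt_0_compat; [apply m_const_pos |].
  assert (2 / (p - 1) * (p - 1) = 2) by (field; lra).
  nra.
Qed.

Lemma q_const_pos : 0 < q_const N p.
Proof.
  pose proof INR_ge_3. unfold q_const. apply Rmult_lt_0_compat; lra.
Qed.

Lemma B0_fun_bounds (t : R) : t <= 0 ->
  0 <= B0_fun N p t <= q_const N p * exp (q_const N p) * exp (2 * m_const N p * t).
Proof.
  intros Ht. pose proof q_const_pos as Hq. pose proof (m_const_pos N p).
  set (E := exp (2 * m_const N p * t)).
  assert (HE : 0 < E <= 1).
  { split; [apply exp_pos |]. rewrite <- exp_0. apply exp_le_exp. nra. }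
  destruct (Rpower_1_plus_sub1_bounds (q_const N p) E Hq ltac:(lra)) as [Hlo Hhi].
  assert (exp (q_const N p * E) <= exp (q_const N p)) by (apply exp_le_exp; nra).
  unfold B0_fun. fold E. split; [assumption |].
  eapply Rle_trans; [exact Hhi |].
  apply Rmult_le_compat_r; [lra |]. apply Rmult_le_compat_l; lra.
Qed.

Lemma B1_fun_bounds (t : R) :
  0 <= B1_fun N p t <= INR N * (INR N - 2) * exp (2 * m_const N p * t).
Proof.
  pose proof INR_ge_3.
  unfold B1_fun. set (E := exp (2 * m_const N p * t)).
  assert (HE : 0 < E) by apply exp_pos.
  assert (Hc : 0 < INR N * (INR N - 2) * E) by (apply Rmult_lt_0_compat; nra).
  assert (1 <= (1 + E) ^ 2) by nra.
  split; [apply Rlt_le, Rdiv_lt_0_compat; nra |].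
  unfold Rdiv. rewrite <- (Rmult_1_r (INR N * (INR N - 2) * E)) at 2.
  apply Rmult_le_compat_l; [lra |].
  rewrite <- Rinv_1. apply Rinv_le_contravar; lra.
Qed.

Lemma ode_residual_bound (eps : R) : 0 <= eps -> exists C0, 0 <= C0 /\
  forall t y0 y1t y2t, t <= 0 -> Rabs (y0 - 1) <= 1/2 ->
  Rabs (Rpower y0 p - 1 - p * (y0 - 1)) <= eps * Rabs (y0 - 1) ->
  y2t + alpha_const N p * y1t - y0 + Rpower y0 p
    + B0_fun N p t * Rpower y0 p + B1_fun N p t * y0 = 0 ->
  Rabs (y2t + alpha_const N p * y1t + (p - 1) * (y0 - 1))
  <= eps * Rabs (y0 - 1) + C0 * exp (2 * m_const N p * t).
Proof.
  intros Heps.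
  pose proof exponent_gt_1. pose proof INR_ge_3. pose proof q_const_pos.
  exists ((1 + p + eps) * (q_const N p * exp (q_const N p)) + 2 * (INR N * (INR N - 2))).
  split.
  { pose proof (exp_pos (q_const N p)).
    assert (0 <= q_const N p * exp (q_const N p)) by nra. nra. }
  intros t y0 y1t y2t Ht Hz Happrox Hode.
  destruct (B0_fun_bounds t Ht) as [HB0lo HB0hi].
  destruct B1_fun_bounds with t as [HB1lo HB1hi].
  set (E := exp (2 * m_const N p * t)) in *.
  set (Y := Rpower y0 p) in *.
  set (z := y0 - 1) in *.
  assert (HY : 0 < Y) by apply exp_pos.
  pose proof (Rabs_le_between _ _ Hz). pose proof (Rabs_le_between _ _ Happrox).
  assert (Hzabs : -Rabs z <= z <= Rabs z) by (apply Rabs_le_between; lra).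
  assert (HYle : Y <= 1 + p + eps) by nra.
  assert (B0_fun N p t * Y <= q_const N p * exp (q_const N p) * E * (1 + p + eps))
    by (apply Rmult_le_compat; lra).
  assert (0 <= B0_fun N p t * Y) by nra.
  assert (B1_fun N p t * y0 <= INR N * (INR N - 2) * E * 2)
    by (apply Rmult_le_compat; unfold z in *; lra).
  assert (0 <= B1_fun N p t * y0) by (unfold z in *; nra).
  replace (y2t + alpha_const N p * y1t + (p - 1) * z)
    with (- (Y - 1 - p * z) - B0_fun N p t * Y - B1_fun N p t * y0)
    by (unfold z in *; lra).
  apply Rabs_le. split; nra.
Qed.

End Coefficients.

Theorem lemma4p1 (N : nat) (p T : R) (y y1 y2 : R -> R) :
  (3 <= N)%nat ->
  pS N < p ->
  (* y is a positive C^2 solution on (-oo, T] (the ODE imposed for t < T) *)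
  (forall t, t <= T -> 0 < y t) ->
  (forall t, t < T -> derivable_pt_lim y t (y1 t)) ->
  (forall t, t < T -> derivable_pt_lim y1 t (y2 t)) ->
  (forall t, t < T ->
     y2 t + alpha_const N p * y1 t - y t + Rpower (y t) p
     + B0_fun N p t * Rpower (y t) p + B1_fun N p t * y t = 0) ->
  (* y(t) -> 1 as t -> -oo *)
  (forall eps, 0 < eps -> exists t0, forall t, t <= t0 -> Rabs (y t - 1) < eps) ->
  (* y(t) = 1 + O(e^{2 m t}) as t -> -oo *)
  exists C t0, forall t, t <= t0 ->
    Rabs (y t - 1) <= C * exp (2 * m_const N p * t).
Proof.
  intros HN Hp _ Hy Hy1 Hode Hlim.
  pose proof (alpha_const_pos N p HN Hp) as Hal.
  pose proof (exponent_gt_1 N p HN Hp) as Hp1.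
  set (eps := Rmin (alpha_const N p) (alpha_const N p * (p - 1)) / (4 * (1 + alpha_const N p))).
  assert (Heps : 0 < eps) by (apply Rdiv_lt_0_compat; [apply Rmin_pos |]; nra).
  destruct (ode_residual_bound N p HN Hp eps ltac:(lra)) as [C0 [HC0 Hresidual]].
  destruct (Rpower_1_plus_linear_approx p eps Heps) as [d [Hd [Hd_half Happrox]]].
  destruct (Hlim d Hd) as [t0 Ht0].
  set (t1 := Rmin t0 (Rmin (T - 1) 0)).
  assert (Ht1 : forall t, t <= t1 -> t <= t0 /\ t < T /\ t <= 0).
  { intros t Ht. unfold t1 in Ht.
    pose proof (Rmin_l t0 (Rmin (T - 1) 0)). pose proof (Rmin_r t0 (Rmin (T - 1) 0)).
    pose proof (Rmin_l (T - 1) 0). pose proof (Rmin_r (T - 1) 0). lra. }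
  assert (Hclose : forall t, t <= t1 -> Rabs (y t - 1) <= d)
    by (intros t Ht; left; apply Ht0, Ht1, Ht).
  destruct (damped_decay (fun t => y t - 1) y1 y2 (alpha_const N p) (p - 1)
              (2 * m_const N p) eps C0 d t1) as [C HC]; try assumption; try lra.
  - pose proof (m_const_pos N p). lra.
  - unfold eps. right. field. lra.
  - intros t Ht. replace (y1 t) with (y1 t - 0) by ring.
    apply derivable_pt_lim_minus_fun; [apply Hy, Ht1, Ht | apply derivable_pt_lim_const].
  - intros t Ht. apply Hy1, Ht1, Ht.
  - intros t Ht. destruct (Ht1 t Ht) as [_ [HtT Ht_neg]].
    pose proof (Hclose t Ht) as Hyt.
    pose proof (Happrox (y t - 1) Hyt) as Hpow.
    replace (1 + (y t - 1)) with (y t) in Hpow by ring.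
    apply Hresidual; [assumption | lra | exact Hpow | apply Hode, HtT].
  - exists C, t1. exact HC.
Qed.
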